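(* For every integer $n\ge 3$, $$m^*(n,3)\le \left\lceil \frac{3}{\log_2 3}\log_2 n\right\rceil.$$
   Context: For a binary matrix $M$ and a nonempty set $S$ of its columns, $S$ is a stopping set if the submatrix formed by $S$ has no row with exactly one $1$; $s(M)$ is the minimum size of a stopping set ($+\infty$ if none). $M$ is $d$-decodable if $s(M)\ge d+1$. $m^*(n,d)$ is the minimum $m$ such that an $m\times n$ $d$-decodable binary matrix exists. *)

From HB Require Import structures.
From Stdlib Require Import Reals.
From mathcomp Require Import all_boot all_order all_algebra.
From mathcomp Require Import Rstruct.
Set Implicit Arguments. Unset Strict Implicit. Unset Printing Implicit Defensive.

Definition stopping_set (m n : nat) (M : 'M[bool]_(m, n)) (S : {set 'I_n}) : bool :=
  (S != set0) && [forall i : 'I_m, #|[set j in S | M i j]| != 1%N].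

(* d-decodable: s(M) >= d+1, where s(M) is the minimum size of a stopping set
   (+oo if none), i.e. every stopping set has size at least d+1. *)
Definition decodable (m n : nat) (M : 'M[bool]_(m, n)) (d : nat) : bool :=
  [forall S : {set 'I_n}, stopping_set M S ==> (d + 1 <= #|S|)%N].

Definition has_decodable (n d m : nat) : bool :=
  [exists M : 'M[bool]_(m, n), decodable M d].

(* The identity matrix has no stopping set, hence is d-decodable for all d. *)
Lemma has_decodable_id (n d : nat) : has_decodable n d n.
Proof.
apply/existsP; exists (\matrix_(i < n, j < n) (i == j))%R.
apply/forallP => S; apply/implyP => /andP [/set0Pn [j jS] /forallP H].
move: (H j); have -> : [set j0 in S | (\matrix_(i < n, j1 < n) (i == j1))%R j j0]
   = [set j].
  apply/setP => k; rewrite !inE mxE eq_sym.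
  by case: (eqVneq k j) => [->|_]; rewrite ?jS ?andbT ?andbF.
by rewrite cards1.
Qed.

Lemma ex_has_decodable (n d : nat) : exists m, has_decodable n d m.
Proof. by exists n; exact: has_decodable_id. Qed.

Definition mstar (n d : nat) : nat :=
  ex_minn (@ex_has_decodable n d).

(* A binary matrix is 3-decodable iff every nonempty set of at most three columns has a row
   meeting it in exactly one column.  If M1 has this property and moreover separates columns
   (for x <> y some row contains y but not x), and M2 has it, then the matrix with columns
   T1 x T2 whose rows are those of M1 read on the first coordinate and those of M2 read on the
   second is again 3-decodable: if the first coordinates of the chosen columns are distinct M1
   isolates one of them, if they all agree M2 does, and if exactly two agree a separating row of
   M1 isolates the third.  Taking M1 the 3 x 3 identity, three more rows triple the number of
   columns.  Starting from small designs with (rows, columns) = (3, 3) (the identity), (4, 5)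
   and (5, 6) (the identity plus an all-ones column) and (8, 20) (the 4-cycle incidence matrix,
   which separates, times the (4, 5) design) this gives a 3-decodable m x n matrix whenever
   n ^ 3 <= 3 ^ m, and the bound on m^*(n, 3) follows by taking logarithms. *)

From Stdlib Require Import Reals Lra.
From mathcomp Require Import all_boot all_order all_algebra.
From mathcomp Require Import Rstruct zify ring.

Set Implicit Arguments. Unset Strict Implicit. Unset Printing Implicit Defensive.
Import Order.TTheory GRing.Theory Num.Theory.

Definition unique_in (T : eqType) (P : pred T) (s : seq T) :=
  exists2 x, x \in s & P x /\ {in s, forall y, P y -> y = x}.

Definition unique_inb (T : eqType) (P : pred T) (s : seq T) :=
  has (fun x => P x && all (fun y => P y ==> (y == x)) s) s.

Lemma unique_inP (T : eqType) (P : pred T) (s : seq T) :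
  reflect (unique_in P s) (unique_inb P s).
Proof.
apply: (iffP hasP) => [[x xs /andP [Px /allP Ux]] | [x xs [Px Ux]]].
  exists x => //; split=> // y ys Py; apply/eqP.
  by move/implyP: (Ux y ys); apply.
exists x; rewrite // Px; apply/allP => y ys; apply/implyP => Py.
by rewrite (Ux y ys Py).
Qed.

Lemma unique_in_map (T U : eqType) (f : T -> U) (P : pred U) (s : seq T) :
  {in s &, injective f} -> unique_in P (map f s) -> unique_in (P \o f) s.
Proof.
move=> f_inj [_ /mapP [x xs ->] [Pfx Ux]]; exists x => //; split=> // y ys Pfy.
by apply: f_inj => //; apply: Ux => //; apply: map_f.
Qed.

Lemma injective_in_or_collision (T U : eqType) (f : T -> U) (s : seq T) :
  {in s &, injective f} \/ exists u v, [/\ u \in s, v \in s, u != v & f u = f v].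
Proof.
have [/allP f_inj | ] := boolP (all (fun u => all (fun v => (f u == f v) ==> (u == v)) s) s).
  left => u v us vs fuv; apply/eqP.
  by move/allP: (f_inj u us) => /(_ v vs) /implyP; apply; apply/eqP.
rewrite -has_predC => /hasP [u us]; rewrite /= -has_predC => /hasP [v vs].
by rewrite /= negb_imply => /andP [/eqP fuv uv]; right; exists u, v.
Qed.

Lemma distinct_mem3_subset (T : eqType) (a b c u v w : T) :
  u \in [:: a; b; c] -> v \in [:: a; b; c] -> w \in [:: a; b; c] ->
  u != v -> u != w -> v != w -> {subset [:: a; b; c] <= [:: u; v; w]}.
Proof.
rewrite !inE => + + + + + + y; rewrite !inE.
by case/or3P => /eqP ->; case/or3P => /eqP ->; case/or3P => /eqP ->;
  rewrite ?eqxx // => _ _ _; case/or3P => /eqP ->; rewrite ?eqxx ?orbT.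
Qed.

(* Rows are indexed by [R], columns by [T]; listing columns with repetitions, [[:: a; b; c]]
   ranges over the nonempty column sets of size at most 3 (compare [decodable3P]). *)
Definition three_decodable (R : Type) (T : eqType) (M : R -> T -> bool) :=
  forall a b c : T, exists r, unique_in (M r) [:: a; b; c].

Definition separating (R : Type) (T : eqType) (M : R -> T -> bool) :=
  forall x y : T, x != y -> exists r, M r y && ~~ M r x.

Definition prod_family (R1 R2 T1 T2 : Type) (M1 : R1 -> T1 -> bool) (M2 : R2 -> T2 -> bool)
    (r : R1 + R2) (t : T1 * T2) : bool :=
  match r with inl r1 => M1 r1 t.1 | inr r2 => M2 r2 t.2 end.

Lemma three_decodable_prod (R1 R2 : Type) (T1 T2 : eqType)
    (M1 : R1 -> T1 -> bool) (M2 : R2 -> T2 -> bool) :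
  three_decodable M1 -> separating M1 -> three_decodable M2 ->
  three_decodable (prod_family M1 M2).
Proof.
move=> dec1 sep1 dec2 a b c; set L := [:: a; b; c].
have [fst_inj | [u [v [uL vL uv uv1]]]] := injective_in_or_collision fst L.
  by have [r1 iso] := dec1 a.1 b.1 c.1; exists (inl r1); exact: (unique_in_map fst_inj iso).
have [/allP fst_const | ] := boolP (all (fun y => y.1 == u.1) L).
  have [r2 iso] := dec2 a.2 b.2 c.2; exists (inr r2).
  suff snd_inj : {in L &, injective snd} by exact: (unique_in_map snd_inj iso).
  by move=> [x1 x2] [y1 y2] /fst_const /eqP /= -> /fst_const /eqP /= -> /= ->.
rewrite -has_predC => /hasP [w wL /= wu].
have [r /andP [Mw Mu]] : exists r, M1 r w.1 && ~~ M1 r u.1 by apply: sep1; rewrite eq_sym.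
exists (inl r), w => //; split=> // y yL My.
have uw : u != w by apply: contraNneq wu => <-.
have vw : v != w by apply: contraNneq wu => <-; rewrite uv1.
move: (distinct_mem3_subset uL vL wL uv uw vw yL); rewrite !inE.
by case/or3P => /eqP y_eq //; move: My; rewrite y_eq /= -?uv1 (negbTE Mu).
Qed.

Lemma separating_prod (R1 R2 : Type) (T1 T2 : eqType)
    (M1 : R1 -> T1 -> bool) (M2 : R2 -> T2 -> bool) :
  separating M1 -> separating M2 -> separating (prod_family M1 M2).
Proof.
move=> sep1 sep2 [x1 x2] [y1 y2] xy.
have [x1y1 | x1y1] := eqVneq x1 y1.
  have x2y2 : x2 != y2 by apply: contraNneq xy => ->; rewrite x1y1.
  by have [r Mr] := sep2 _ _ x2y2; exists (inr r).
by have [r Mr] := sep1 _ _ x1y1; exists (inl r).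
Qed.

Lemma three_decodable_id (T : eqType) : three_decodable (fun r t : T => r == t).
Proof. by move=> a b c; exists a, a; rewrite ?inE ?eqxx //; split=> // y _ /eqP. Qed.

Lemma separating_id (T : eqType) : separating (fun r t : T => r == t).
Proof. by move=> x y xy; exists y; rewrite eqxx eq_sym. Qed.

Lemma three_decodable_reindex (R R' : Type) (T T' : eqType)
    (M : R -> T -> bool) (M' : R' -> T' -> bool) (g : R' -> R) (f : T' -> T) :
  (forall r, exists i, g i = r) -> injective f -> (forall i j, M' i j = M (g i) (f j)) ->
  three_decodable M -> three_decodable M'.
Proof.
move=> g_onto f_inj M'E dec a b c.
have [r iso] := dec (f a) (f b) (f c); have [i gi] := g_onto r.
have [x xs [Mx Ux]] := unique_in_map (s := [:: a; b; c]) (in2W f_inj) iso.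
exists i, x; rewrite // M'E gi; split=> // y ys; rewrite M'E gi; exact: Ux.
Qed.

Lemma card_le3_triple (T : finType) (S : {set T}) :
  S != set0 -> #|S| <= 3 -> exists a b c, S =i [:: a; b; c].
Proof.
move=> S0 S_le3; have S_gt0 : 0 < #|S| by rewrite card_gt0.
have memS y : (y \in S) = (y \in enum S) by rewrite mem_enum.
move: S_gt0 S_le3 memS; rewrite cardE.
case: (enum S) => [|a [|b [|c [|d s]]]] //= _ _ memS.
- by exists a, a, a => y; rewrite memS !inE !orbb.
- by exists a, b, b => y; rewrite memS !inE !orbb.
- by exists a, b, c.
Qed.

Lemma decodable3P (m n : nat) (M : 'M[bool]_(m, n)) :
  reflect (three_decodable M) (decodable M 3).
Proof.
apply: (iffP forallP) => [dec a b c | dec S].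
  set S := [set j in [:: a; b; c]].
  have S_le3 : #|S| <= 3 by rewrite cardsE (card_size [:: a; b; c]).
  have : ~~ stopping_set M S.
    by apply: contraTN S_le3 => /(implyP (dec S)); rewrite addn1 -ltnNge.
  rewrite negb_and negbK; have -> : (S == set0) = false.
    by apply/negbTE/set0Pn; exists a; rewrite inE mem_head.
  case/forallPn => r; rewrite negbK => /cards1P [x Sr].
  have : x \in [set j in S | M r j] by rewrite Sr set11.
  rewrite !in_set => /andP [xs Mx]; exists r, x => //; split=> // y ys My.
  by apply/set1P; rewrite -Sr !in_set ys My.
apply/implyP => /andP [S0 /forallP S_stop]; rewrite addn1 leqNgt; apply/negP => S_le3.
have [a [b [c Sabc]]] := card_le3_triple S0 S_le3.
have [r [x xs [Mx Ux]]] := dec a b c.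
suff S_r : [set j in S | M r j] = [set x] by move: (S_stop r); rewrite S_r cards1.
apply/setP => j; rewrite in_set1 in_set Sabc.
by apply/andP/eqP => [[js Mj] | ->]; [exact: Ux | split].
Qed.

Lemma has_decodable_of_family (R T : finType) (M : R -> T -> bool) (n : nat) :
  three_decodable M -> n <= #|T| -> has_decodable n 3 #|R|.
Proof.
move=> dec nT; pose f (j : 'I_n) := enum_val (widen_ord nT j).
apply/existsP; exists (\matrix_(i, j) M (enum_val i) (f j))%R; apply/decodable3P.
apply: (three_decodable_reindex (g := enum_val) (f := f) _ _ _ dec).
- by move=> r; exists (enum_rank r); rewrite enum_rankK.
- by move=> i j /enum_val_inj /(congr1 val) /= /val_inj.
- by move=> i j; rewrite mxE.
Qed.

Lemma has_decodable3_le (n n' m : nat) :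
  n <= n' -> has_decodable n' 3 m -> has_decodable n 3 m.
Proof.
move=> le_n /existsP [M /decodable3P dec].
by rewrite -[m]card_ord; apply: has_decodable_of_family dec _; rewrite card_ord.
Qed.

Lemma has_decodable3_prod (R1 T1 : finType) (M1 : R1 -> T1 -> bool) (n m : nat) :
  three_decodable M1 -> separating M1 -> has_decodable n 3 m ->
  has_decodable (#|T1| * n) 3 (#|R1| + m).
Proof.
move=> dec1 sep1 /existsP [M /decodable3P dec].
have := has_decodable_of_family (three_decodable_prod dec1 sep1 dec) (leqnn _).
by rewrite card_sum card_prod !card_ord.
Qed.

Lemma has_decodable3_pow3 (j n m : nat) :
  has_decodable n 3 m -> has_decodable (3 ^ j * n) 3 (3 * j + m).
Proof.
move=> dec; elim: j => [|j IH]; first by rewrite mul1n.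
have := has_decodable3_prod (three_decodable_id (T := 'I_3)) (@separating_id _) IH.
by rewrite !card_ord expnS mulnA mulnS addnA.
Qed.

(* Tripling the columns at the cost of three rows preserves [3 ^ m <= N ^ 3]. *)
Lemma has_decodable3_of_cube_le_base (N m j n : nat) :
  has_decodable N 3 m -> 3 ^ m <= N ^ 3 -> n ^ 3 <= 3 ^ (3 * j + m) ->
  has_decodable n 3 (3 * j + m).
Proof.
move=> dec base_le n_le; apply: has_decodable3_le (has_decodable3_pow3 j dec).
rewrite -(leq_exp2r _ _ (isT : 0 < 3)); apply: leq_trans n_le _.
by rewrite expnMn expnD -expnM [j * 3]mulnC leq_mul2l base_le orbT.
Qed.

Definition nat_family (p q : nat) (A : nat -> nat -> bool) : 'I_p -> 'I_q -> bool :=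
  fun r t => A r t.
Arguments nat_family : clear implicits.

Definition three_decodableb (p q : nat) (A : nat -> nat -> bool) : bool :=
  all (fun a => all (fun b => all (fun c =>
    has (fun r => unique_inb (A r) [:: a; b; c]) (iota 0 p)) (iota 0 q)) (iota 0 q)) (iota 0 q).

Definition separatingb (p q : nat) (A : nat -> nat -> bool) : bool :=
  all (fun x => all (fun y =>
    (x != y) ==> has (fun r => A r y && ~~ A r x) (iota 0 p)) (iota 0 q)) (iota 0 q).

Lemma nat_family_three_decodable (p q : nat) (A : nat -> nat -> bool) :
  three_decodableb p q A -> three_decodable (nat_family p q A).
Proof.
have iota_ord (i : 'I_q) : val i \in iota 0 q by rewrite mem_iota add0n ltn_ord.
move=> /allP decA a b c.
move: (decA _ (iota_ord a)) => /allP /(_ _ (iota_ord b)) /allP /(_ _ (iota_ord c)) /hasP [r].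
rewrite mem_iota add0n => /= r_lt /unique_inP iso.
by exists (Ordinal r_lt); exact: (unique_in_map (s := [:: a; b; c]) (in2W (@ord_inj q)) iso).
Qed.

Lemma nat_family_separating (p q : nat) (A : nat -> nat -> bool) :
  separatingb p q A -> separating (nat_family p q A).
Proof.
have iota_ord (i : 'I_q) : val i \in iota 0 q by rewrite mem_iota add0n ltn_ord.
move=> /allP sepA x y xy.
move: (sepA _ (iota_ord x)) => /allP /(_ _ (iota_ord y)) /implyP /(_ xy) /hasP [r].
by rewrite mem_iota add0n => /= r_lt Ar; exists (Ordinal r_lt).
Qed.

Definition star_family (k : nat) := nat_family k k.+1 (fun r t => (t == k) || (r == t)).

Definition cycle_family (k : nat) :=
  nat_family k k (fun r t => (r == t) || (r == (t + 1) %% k)).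

Lemma star_family4_three_decodable : three_decodable (@star_family 4).
Proof. by apply: nat_family_three_decodable; vm_compute. Qed.

Lemma star_family5_three_decodable : three_decodable (@star_family 5).
Proof. by apply: nat_family_three_decodable; vm_compute. Qed.

Lemma cycle_family4_three_decodable : three_decodable (@cycle_family 4).
Proof. by apply: nat_family_three_decodable; vm_compute. Qed.

Lemma cycle_family4_separating : separating (@cycle_family 4).
Proof. by apply: nat_family_separating; vm_compute. Qed.

Lemma has_decodable3_of_cube_le (n m : nat) :
  3 <= n -> n ^ 3 <= 3 ^ m -> has_decodable n 3 m.
Proof.
move=> n_ge3 n_le.
have base4 : has_decodable 5 3 4.
  have := has_decodable_of_family star_family4_three_decodable (leqnn #|'I_5|).
  by rewrite !card_ord.
have base5 : has_decodable 6 3 5.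
  have := has_decodable_of_family star_family5_three_decodable (leqnn #|'I_6|).
  by rewrite !card_ord.
have base8 : has_decodable 20 3 8.
  have := has_decodable3_prod cycle_family4_three_decodable cycle_family4_separating base4.
  by rewrite !card_ord.
have m_ge3 : 3 <= m.
  rewrite -(leq_exp2l _ _ (isT : 1 < 3)); apply: leq_trans n_le.
  by rewrite leq_exp2r.
have r_lt := ltn_pmod m (isT : 0 < 3).
move: m_ge3 n_le; rewrite (divn_eq m 3); move: (m %% 3) (m %/ 3) r_lt => r q.
case: r => [|[|[|//]]] _.
- case: q => [//|q]; rewrite (_ : q.+1 * 3 + 0 = 3 * q + 3); last by lia.
  by move=> _; apply: has_decodable3_of_cube_le_base (has_decodable_id 3 3) _.
- case: q => [//|q]; rewrite (_ : q.+1 * 3 + 1 = 3 * q + 4); last by lia.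
  by move=> _; apply: has_decodable3_of_cube_le_base base4 _.
- case: q => [//|[|q]]; last first.
    rewrite (_ : q.+2 * 3 + 2 = 3 * q + 8); last by lia.
    by move=> _; apply: has_decodable3_of_cube_le_base base8 _.
  move=> _ n_le; apply: has_decodable3_le base5.
  (* [3 ^ 5 > 6 ^ 3], so [m = 5] is not covered by the base lemma; but [3 ^ 5 < 7 ^ 3]. *)
  by rewrite -ltnS -(ltn_exp2r _ _ (isT : 0 < 3)); apply: leq_ltn_trans n_le _.
Qed.

Lemma mstar_le (n d m : nat) : has_decodable n d m -> mstar n d <= m.
Proof. by move=> dec; rewrite /mstar; case: ex_minnP => k _; apply. Qed.

Section Logarithms.
Local Open Scope R_scope.

Lemma ln_gt0 (a : R) : 1 < a -> 0 < ln a.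
Proof. by move=> a_gt1; rewrite -ln_1; apply: ln_increasing; lra. Qed.

Lemma le_pow_of_ln_div_le (a b : R) (k : nat) :
  1 < a -> 0 < b -> ln b / ln a <= INR k -> b <= a ^ k.
Proof.
move=> a_gt1 b_gt0 le_k; have ln_a := ln_gt0 a_gt1.
apply: Rnot_lt_le => lt_b.
have := ln_increasing _ _ (pow_lt a k ltac:(lra)) lt_b; rewrite ln_pow; last lra.
have := Rmult_le_compat_r _ _ _ (Rlt_le _ _ ln_a) le_k.
rewrite /Rdiv Rmult_assoc Rinv_l; lra.
Qed.

End Logarithms.

Lemma leq_expn_of_ln_div_le (a b k : nat) :
  1 < a -> 0 < b -> (ln (INR b) / ln (INR a) <= k%:R)%R -> b <= a ^ k.
Proof.
move=> a_gt1 b_gt0 /RleP; rewrite -INRE => le_k.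
rewrite -(ler_nat R) natrX -!INRE -RpowE; apply/RleP.
by apply: le_pow_of_ln_div_le le_k; apply/RltP; rewrite INRE ?ltr1n ?ltr0n.
Qed.

Theorem theorem5p5 (n : nat) (hn : (3 <= n)%N) :
  ((mstar n 3)%:Z <=
   Num.ceil ((3 / (ln 3 / ln 2) * (ln (INR n) / ln 2))%R : R))%R.
Proof.
have ln2_gt0 : (0 < ln 2)%R by apply/RltP/ln_gt0; lra.
have ln3_gt0 : (0 < ln 3)%R by apply/RltP/ln_gt0; lra.
have cube_gt1 : 1 < n ^ 3 by rewrite -(exp1n 3) ltn_exp2r //; lia.
set x := (3 / _ * _)%R.
have x_eq : x = (ln (INR (n ^ 3)) / ln 3)%R.
  rewrite INRE natrX -INRE -RpowE ln_pow; last by apply/RltP; rewrite INRE ltr0n; lia.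
  rewrite /x !INRE RmultE; field.
  by rewrite !gt_eqF.
have x_ge0 : (0 <= x)%R.
  rewrite x_eq divr_ge0 ?ltW //.
  by apply/RltP/ln_gt0/RltP; rewrite INRE ltr1n.
have := ceil_ge x; have : (0 <= Num.ceil x)%R.
  by rewrite ceil_ge0 (lt_le_trans _ x_ge0) ?ltrN10.
case: (Num.ceil x) => [k _ x_le | //]; rewrite lez_nat.
apply/mstar_le/has_decodable3_of_cube_le => //.
apply: (leq_expn_of_ln_div_le _ (ltnW cube_gt1)) => //.
by rewrite [INR 3]INR_IZR_INZ -x_eq.
Qed.
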